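(* Let $\mathcal{H},\mathcal{K}$ be real or complex Hilbert spaces and let $S:\mathcal{H}\to\mathcal{K}$ and $T:\mathcal{K}\to\mathcal{H}$ be (not necessarily densely defined or closed) linear operators. The following two statements are equivalent: (i) $T$ is densely defined and $S=T^*$; (ii) (a) $(\operatorname{ran} T)^{\perp}=\ker S$, and (b) $\operatorname{ran} S+\operatorname{ran} T^*\subset \operatorname{ran}(S\cap T^* )$.
   Context: Operators are identified with their graphs (linear relations). For a linear relation $R\subset\mathcal{K}\times\mathcal{H}$ its adjoint is the linear relation $R^*=\{(h',k')\in\mathcal{H}\times\mathcal{K}:\langle h,h'\rangle=\langle k,k'\rangle\ \forall (k,h)\in R\}$; it is an operator iff $R$ is densely defined, but in general may be multivalued. $\operatorname{ran}$ of a relation is the set of second coordinates, $\ker S=\{x:Sx=0\}$, and $S\cap T^*$ is the intersection of the graph of $S$ with $T^*$. *)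

From mathcomp Require Import all_boot all_algebra.
From mathcomp Require Import reals complex.
Set Implicit Arguments. Unset Strict Implicit. Unset Printing Implicit Defensive.
Import GRing.Theory Num.Theory.
Local Open Scope ring_scope.

(* Hilbert space over a scalar field F (to be instantiated with R or R[i])
   with conjugation cj (identity for R, Num.conj for R[i]).
   ip is linear in the first argument, conjugate-symmetric, positive definite,
   and the space is complete for the norm  ||x|| = sqrt (ip x x). *)
Definition ip_norm2 (F : numFieldType) (V : lmodType F) (ip : V -> V -> F)
  (x : V) : F := ip x x.

Record is_hilbert (F : numFieldType) (cj : F -> F) (V : lmodType F)
    (ip : V -> V -> F) : Prop := {
  ip_linl : forall (a : F) (x y z : V), ip (a *: x + y) z = a * ip x z + ip y z;
  ip_sym : forall x y : V, ip y x = cj (ip x y);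
  ip_pos : forall x : V, 0 <= ip x x;
  ip_def : forall x : V, ip x x = 0 -> x = 0;
  ip_complete : forall u : nat -> V,
    (forall e : F, 0 < e -> exists N : nat, forall m n : nat,
        (N <= m)%N -> (N <= n)%N -> ip_norm2 ip (u m - u n) < e) ->
    exists x : V, forall e : F, 0 < e -> exists N : nat, forall n : nat,
        (N <= n)%N -> ip_norm2 ip (u n - x) < e
}.

Record linop (F : numFieldType) (V W : lmodType F) := LinOp {
  dom : V -> Prop;
  app : V -> W;
  dom0 : dom 0;
  domL : forall (a : F) (x y : V), dom x -> dom y -> dom (a *: x + y);
  appL : forall (a : F) (x y : V), dom x -> dom y ->
           app (a *: x + y) = a *: app x + app y
}.

Definition graph (F : numFieldType) (V W : lmodType F) (A : linop V W)
  (x : V) (y : W) : Prop := dom A x /\ app A x = y.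

(* the adjoint T^* ⊂ H x K of an operator T : K -> H (a linear relation):
   (h', k') ∈ T^*  iff  <T k, h'> = <k, k'> for all k ∈ dom T *)
Definition adjoint_rel (F : numFieldType) (K H : lmodType F)
  (ipK : K -> K -> F) (ipH : H -> H -> F) (T : linop K H)
  (h' : H) (k' : K) : Prop :=
  forall k : K, dom T k -> ipH (app T k) h' = ipK k k'.

Definition dense_in (F : numFieldType) (V : lmodType F) (ip : V -> V -> F)
  (D : V -> Prop) : Prop :=
  forall (x : V) (e : F), 0 < e -> exists d : V, D d /\ ip_norm2 ip (x - d) < e.

Definition ran_rel (X Y : Type) (Rl : X -> Y -> Prop) (y : Y) : Prop :=
  exists x, Rl x y.

Definition thm38 (F : numFieldType) (cj : F -> F) : Prop :=
  forall (H K : lmodType F) (ipH : H -> H -> F) (ipK : K -> K -> F),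
  is_hilbert cj ipH -> is_hilbert cj ipK ->
  forall (S : linop H K) (T : linop K H),
  ( (* (i) T densely defined and S = T^* (as linear relations) *)
    dense_in ipK (dom T) /\
    (forall (h : H) (k : K), graph S h k <-> adjoint_rel ipK ipH T h k) )
  <->
  ( (* (a) (ran T)^⊥ = ker S *)
    (forall h : H, (forall y : H, ran_rel (graph T) y -> ipH y h = 0)
                   <-> (dom S h /\ app S h = 0)) /\
    (* (b) ran S + ran T^* ⊂ ran (S ∩ T^* ) *)
    (forall k : K,
       (exists a b : K, k = a + b /\ ran_rel (graph S) a /\
                        ran_rel (adjoint_rel ipK ipH T) b) ->
       ran_rel (fun h k' => graph S h k' /\ adjoint_rel ipK ipH T h k') k) ).

(* If S = T^*, then ker S = ker T^* = (ran T)^⊥ and S ∩ T^* = S, so (ii) holds.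
   Conversely, (a) identifies ker S with {h | (h, 0) in T^*}, and (b) writes the
   second coordinate of any pair in S or in T^* as S h' with (h', S h') in T^*; the
   difference of the first coordinates then lies in ker S, which gives S = T^* and
   {k | (0, k) in T^*} = 0, i.e. (dom T)^⊥ = 0.  The latter forces dom T to be
   dense: if y is a point of the closure of dom T nearest to x (it exists by
   completeness, a minimizing sequence being Cauchy by the parallelogram law), the
   variational inequality makes x - y orthogonal to dom T, hence x = y. *)

From mathcomp Require Import all_boot all_algebra.
From mathcomp Require Import reals complex.
From mathcomp Require boolp.
From mathcomp Require Import ring lra.

Set Implicit Arguments.
Unset Strict Implicit.
Unset Printing Implicit Defensive.
Import order.Order.TTheory GRing.Theory Num.Theory.
Local Open Scope ring_scope.

Section ScalarField.
Variables (F : numFieldType) (cj : {rmorphism F -> F}).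

Section LinearOperator.
Variables (V W : lmodType F) (A : linop V W).

Lemma app0 : app A 0 = 0.
Proof.
have := appL 1 (dom0 A) (dom0 A); rewrite !scale1r addr0 => h.
by apply: (addrI (app A 0)); rewrite addr0 -h.
Qed.

Lemma domD x y : dom A x -> dom A y -> dom A (x + y).
Proof. by move=> Dx Dy; have := domL 1 Dx Dy; rewrite scale1r. Qed.

Lemma domB x y : dom A x -> dom A y -> dom A (x - y).
Proof. by move=> Dx Dy; have := domL (-1) Dy Dx; rewrite scaleN1r addrC. Qed.

Lemma appD x y : dom A x -> dom A y -> app A (x + y) = app A x + app A y.
Proof. by move=> Dx Dy; have := appL 1 Dx Dy; rewrite !scale1r. Qed.

Lemma appB x y : dom A x -> dom A y -> app A (x - y) = app A x - app A y.
Proof.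
by move=> Dx Dy; have := appL (-1) Dy Dx; rewrite !scaleN1r addrC [- _ + _]addrC.
Qed.

End LinearOperator.

Section InnerProduct.
Variables (V : lmodType F) (ip : V -> V -> F).
Hypothesis hV : is_hilbert cj ip.

Lemma ipDl x y z : ip (x + y) z = ip x z + ip y z.
Proof. by have := ip_linl hV 1 x y z; rewrite scale1r mul1r. Qed.

Lemma ip0l z : ip 0 z = 0.
Proof. by apply: (addrI (ip 0 z)); rewrite -ipDl !addr0. Qed.

Lemma ipZl a x z : ip (a *: x) z = a * ip x z.
Proof. by have := ip_linl hV a x 0 z; rewrite addr0 ip0l addr0. Qed.

Lemma ipDr x y z : ip z (x + y) = ip z x + ip z y.
Proof. by rewrite (ip_sym hV) ipDl rmorphD -!(ip_sym hV). Qed.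

Lemma ipZr a x z : ip z (a *: x) = cj a * ip z x.
Proof. by rewrite (ip_sym hV) ipZl rmorphM -!(ip_sym hV). Qed.

Lemma ip0r z : ip z 0 = 0.
Proof. by rewrite (ip_sym hV) ip0l rmorph0. Qed.

Lemma ipBr x y z : ip z (x - y) = ip z x - ip z y.
Proof. by rewrite -scaleN1r ipDr ipZr rmorphN1 mulN1r. Qed.

End InnerProduct.

Section Adjoint.
Variables (H K : lmodType F) (ipH : H -> H -> F) (ipK : K -> K -> F).
Hypotheses (hH : is_hilbert cj ipH) (hK : is_hilbert cj ipK).
Variables (S : linop H K) (T : linop K H).
Local Notation adjT := (adjoint_rel ipK ipH T).
Local Notation orth_ranT h := (forall y, ran_rel (graph T) y -> ipH y h = 0).

Lemma adjointD h1 h2 k1 k2 : adjT h1 k1 -> adjT h2 k2 -> adjT (h1 + h2) (k1 + k2).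
Proof. by move=> a1 a2 k Dk; rewrite (ipDr hH) (ipDr hK) a1 // a2. Qed.

Lemma adjointB h1 h2 k1 k2 : adjT h1 k1 -> adjT h2 k2 -> adjT (h1 - h2) (k1 - k2).
Proof. by move=> a1 a2 k Dk; rewrite (ipBr hH) (ipBr hK) a1 // a2. Qed.

Lemma orth_ranE h : orth_ranT h <-> adjT h 0.
Proof.
split=> [perp k Dk | a y [k [Dk <-]]].
  by rewrite (ip0r hK); apply: perp; exists k.
by rewrite a // (ip0r hK).
Qed.

Section AdjointGraph.
Hypothesis graphS : forall h k, graph S h k <-> adjT h k.

Lemma ker_adjoint h : orth_ranT h <-> dom S h /\ app S h = 0.
Proof. by rewrite orth_ranE; exact: iff_sym (graphS h 0). Qed.

Lemma ran_add_adjoint k :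
  (exists a b, k = a + b /\ ran_rel (graph S) a /\ ran_rel adjT b) ->
  exists h, graph S h k /\ adjT h k.
Proof.
move=> [a [b [-> [[h1 /graphS Sa] [h2 adjb]]]]].
by exists (h1 + h2); rewrite graphS; have := adjointD Sa adjb.
Qed.

End AdjointGraph.

Section GraphOfConditions.
Hypothesis kerS : forall h, orth_ranT h <-> dom S h /\ app S h = 0.
Hypothesis ranS : forall h k, graph S h k -> exists h', graph S h' k /\ adjT h' k.
Hypothesis ranadjT : forall h k, adjT h k -> exists h', graph S h' k /\ adjT h' k.

Lemma ker_graphE h : adjT h 0 <-> graph S h 0.
Proof. by rewrite -orth_ranE; exact: kerS. Qed.

Lemma adjoint_mul0 k : adjT 0 k -> k = 0.
Proof.
move=> adj0; have [h [[_ Shk] adjh]] := ranadjT adj0.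
have /ker_graphE[_] : adjT h 0 by rewrite -(subrr k) -[h]subr0; apply: adjointB.
by rewrite Shk.
Qed.

Lemma graph_adjointE h k : graph S h k <-> adjT h k.
Proof.
split=> [[Sh Shk] | adjh].
  have [h' [[Sh' Sh'k] adjh']] := ranS (conj Sh Shk).
  have /ker_graphE : graph S (h - h') 0.
    by split; [apply: domB | rewrite appB // Shk Sh'k subrr].
  by move/(adjointD adjh'); rewrite addr0 addrC subrK.
have [h' [[Sh' Sh'k] adjh']] := ranadjT adjh.
have [Sd Sd0] : graph S (h - h') 0.
  by apply/ker_graphE; rewrite -(subrr k); apply: adjointB.
rewrite -(subrK h' h); split; first exact: domD.
by rewrite appD // Sd0 add0r.
Qed.

End GraphOfConditions.
End Adjoint.

(* The scalars contain the reals through r2f, and re inverts r2f on nonnegative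
   scalars; squared norms are taken in R, where infima exist. *)
Section RealScalars.
Variables (R : realType) (r2f : {rmorphism R -> F}) (re : F -> R).
Hypotheses (cjK : involutive cj) (cj_r2f : forall s, cj (r2f s) = r2f s).
Hypotheses (ler_r2f : {mono r2f : x y / x <= y})
  (r2f_reK : forall z, 0 <= z -> r2f (re z) = z).

Let ltr_r2f : {mono r2f : x y / x < y} := leW_mono ler_r2f.

Lemma gt0_r2f (e : F) : 0 < e -> exists2 e' : R, 0 < e' & e = r2f e'.
Proof.
move=> e0; exists (re e); last by rewrite r2f_reK ?ltW.
by rewrite -ltr_r2f rmorph0 r2f_reK ?ltW.
Qed.

Lemma inv_succ_lt (t : R) : 0 < t -> exists n0, forall n, (n0 <= n)%N -> n.+1%:R^-1 < t.
Proof.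
move=> t0; exists (Num.Def.archi_bound t^-1) => n n0n.
have tV_gt0 : 0 < t^-1 by rewrite invr_gt0.
have bound_gt := archi_boundP (ltW tV_gt0).
have bound_le : (Num.Def.archi_bound t^-1)%:R <= n%:R :> R by rewrite ler_nat.
have n_lt : n%:R < n.+1%:R :> R by rewrite ltr_nat.
rewrite invf_plt ?posrE ?ltr0Sn //; lra.
Qed.

Section HilbertSpace.
Variables (V : lmodType F) (ip : V -> V -> F).
Hypothesis hV : is_hilbert cj ip.

Definition norm2 (v : V) : R := re (ip v v).

Lemma norm2E v : r2f (norm2 v) = ip v v.
Proof. exact/r2f_reK/(ip_pos hV). Qed.

Lemma norm2_ge0 v : 0 <= norm2 v.
Proof. by rewrite -ler_r2f rmorph0 norm2E (ip_pos hV). Qed.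

Definition polar (a b : V) : R := norm2 (a + b) - norm2 a - norm2 b.

Lemma polarE a b : r2f (polar a b) = ip a b + ip b a.
Proof. by rewrite !rmorphB !norm2E !(ipDl hV) !(ipDr hV); ring. Qed.

Lemma norm2DZ a b s :
  norm2 (a + r2f s *: b) = norm2 a + s * polar a b + s ^+ 2 * norm2 b.
Proof.
apply: (fmorph_inj r2f).
rewrite !rmorphD !rmorphM polarE !norm2E !(ipDl hV) !(ipDr hV) !(ipZl hV) !(ipZr hV).
by rewrite cj_r2f; ring.
Qed.

Lemma norm2N v : norm2 (- v) = norm2 v.
Proof.
apply: (fmorph_inj r2f).
by rewrite !norm2E -scaleN1r (ipZl hV) (ipZr hV) rmorphN1 mulN1r mulNr opprK mul1r.
Qed.

Lemma norm2_double v : norm2 (v + v) = 4 * norm2 v.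
Proof.
apply: (fmorph_inj r2f).
by rewrite rmorphM rmorph_nat !norm2E (ipDl hV) !(ipDr hV); ring.
Qed.

Lemma parallelogram a b : norm2 (a + b) + norm2 (a - b) = 2 * norm2 a + 2 * norm2 b.
Proof.
have := norm2DZ a b 1; have := norm2DZ a b (-1).
by rewrite rmorph1 rmorphN1 scale1r scaleN1r => -> ->; ring.
Qed.

Lemma polar_sq_le a b : polar a b ^+ 2 <= 4 * norm2 a * norm2 b.
Proof.
have h s : 0 <= norm2 a + s * polar a b + s ^+ 2 * norm2 b.
  by rewrite -norm2DZ norm2_ge0.
have Na := norm2_ge0 a; have Nb := norm2_ge0 b.
have [Nb0|Nb_neq0] := eqVneq (norm2 b) 0.
  rewrite Nb0 mulr0.
  have [->|Q_neq0] := eqVneq (polar a b) 0; first by rewrite expr0n.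
  have := h (- (norm2 a + 1) / polar a b).
  rewrite Nb0 mulr0 addr0 mulfVK //; lra.
have Nb_gt0 : 0 < norm2 b by rewrite lt0r Nb_neq0.
pose s := - polar a b / (2 * norm2 b).
have sNb : s * norm2 b = - polar a b / 2 by rewrite /s; field; rewrite gt_eqF.
have := h s; nra.
Qed.

Lemma norm2_continuous w e : 0 < e ->
  exists2 b, 0 < b & forall v, norm2 v < b -> `|norm2 (w + v) - norm2 w| < e.
Proof.
move=> e0; have Nw := norm2_ge0 w.
have den_gt0 : 0 < 16 * norm2 w + 4 * e by lra.
pose b := e ^+ 2 / (16 * norm2 w + 4 * e).
have bE : b * (16 * norm2 w + 4 * e) = e ^+ 2 by rewrite mulfVK // gt_eqF.
have b_gt0 : 0 < b by rewrite divr_gt0 // exprn_gt0.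
exists b => // v Nv_lt; have Nv := norm2_ge0 v; have cs := polar_sq_le w v.
have -> : norm2 (w + v) - norm2 w = polar w v + norm2 v by rewrite /polar; ring.
have b_le : 4 * b <= e by nra.
have Q_lt : polar w v < e / 2 by nra.
have Q_gt : - (e / 2) < polar w v by nra.
by rewrite ltr_norml; apply/andP; split; lra.
Qed.

Lemma norm2_le_approx w c :
  (forall b, 0 < b -> exists2 v, norm2 v < b & norm2 (w + v) < c + b) -> norm2 w <= c.
Proof.
move=> approx; apply/ler_addgt0Pr => e e0.
have [b b_gt0 cont] := norm2_continuous w (divr_gt0 e0 (ltr0Sn R 1)).
have min_gt0 : 0 < Num.min b (e / 2) by rewrite lt_min b_gt0 divr_gt0.
have [v Nv Nwv] := approx _ min_gt0.
have min_le_b : Num.min b (e / 2) <= b by rewrite ge_min lexx.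
have min_le_e : Num.min b (e / 2) <= e / 2 by rewrite ge_min lexx orbT.
have := cont v (lt_le_trans Nv min_le_b).
by rewrite ltr_norml => /andP[]; lra.
Qed.

Lemma norm2_ge_approx w c :
  (forall b, 0 < b -> exists2 v, norm2 v < b & c <= norm2 (w + v)) -> c <= norm2 w.
Proof.
move=> approx; apply/ler_addgt0Pr => e e0.
have [b b_gt0 cont] := norm2_continuous w e0.
have [v /cont + c_le] := approx _ b_gt0.
by rewrite ltr_norml => /andP[]; lra.
Qed.

Lemma norm2_complete (u : nat -> V) :
  (forall e, 0 < e -> exists N0, forall m n, (N0 <= m)%N -> (N0 <= n)%N ->
     norm2 (u m - u n) < e) ->
  exists x, forall e, 0 < e -> exists N0, forall n, (N0 <= n)%N -> norm2 (x - u n) < e.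
Proof.
move=> cauchy.
have [x lim] : exists x, forall e : F, 0 < e ->
    exists N0, forall n, (N0 <= n)%N -> ip_norm2 ip (u n - x) < e.
  apply: (ip_complete hV) => _ /gt0_r2f[e e_gt0 ->].
  have [N0 hN0] := cauchy e e_gt0.
  by exists N0 => m n hm hn; rewrite /ip_norm2 -norm2E ltr_r2f; apply: hN0.
exists x => e e_gt0.
have [|N0 hN0] := lim (r2f e); first by rewrite -(rmorph0 r2f) ltr_r2f.
by exists N0 => n hn; rewrite -norm2N opprB -ltr_r2f norm2E; apply: hN0.
Qed.

Lemma polar_eq0_of_min z d :
  (forall s, norm2 z <= norm2 (z + r2f s *: d)) -> polar z d = 0.
Proof.
move=> zmin.
have h s : 0 <= s * polar z d + s ^+ 2 * norm2 d by have := zmin s; rewrite norm2DZ; lra.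
have Nd := norm2_ge0 d; have Nd1 : 0 < norm2 d + 1 by lra.
pose s := - polar z d / (norm2 d + 1).
have sE : polar z d = - (s * (norm2 d + 1)) by rewrite mulfVK ?gt_eqF // opprK.
have := h s; rewrite sE => hs.
have s2 : s ^+ 2 <= 0 by nra.
have s0 : s = 0 by nra.
by rewrite s0 mul0r oppr0.
Qed.

Lemma ip_eq0_of_polar z d : (forall a, polar z (a *: d) = 0) -> ip d z = 0.
Proof.
(* For a = cj <d, z>, r2f (polar z (a *: d)) = 2 * <d, z> * cj <d, z>. *)
move=> polar0; have := congr1 r2f (polar0 (cj (ip d z))).
rewrite polarE rmorph0 (ipZl hV) (ipZr hV) cjK (ip_sym hV d z) mulrC -mulr2n.
by move/eqP; rewrite mulrn_eq0 /= mulf_eq0 fmorph_eq0 orbb => /eqP.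
Qed.

Definition adherent (D : V -> Prop) (y : V) : Prop :=
  forall b, 0 < b -> exists2 d, D d & norm2 (y - d) < b.

Section Subspace.
Variable D : V -> Prop.
Hypotheses (D0 : D 0) (DL : forall a x y, D x -> D y -> D (a *: x + y)).

Let DD x y : D x -> D y -> D (x + y).
Proof. by move=> Dx Dy; rewrite -[x]scale1r; apply: DL. Qed.

Let DZ a x : D x -> D (a *: x).
Proof. by move=> Dx; rewrite -[_ *: _]addr0; apply: DL. Qed.

Lemma adherentD u d : adherent D u -> D d -> adherent D (u + d).
Proof.
move=> adu Dd b /adu[d' Dd' ud'_lt]; exists (d' + d); first exact: DD.
by rewrite opprD addrACA subrr addr0.
Qed.

Lemma adherent_norm2_ge c x u :
  (forall d, D d -> c <= norm2 (x - d)) -> adherent D u -> c <= norm2 (x - u).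
Proof.
move=> c_le adu; apply: norm2_ge_approx => b /adu[d Dd ud_lt].
by exists (u - d) => //; rewrite addrA subrK; apply: c_le.
Qed.

Lemma norm2_sub_le_dist c x d1 d2 : (forall d, D d -> c <= norm2 (x - d)) ->
  D d1 -> D d2 -> norm2 (d1 - d2) <= 2 * (norm2 (x - d1) - c) + 2 * (norm2 (x - d2) - c).
Proof.
move=> c_le D1 D2.
have half : 2^-1 + 2^-1 = 1 :> F by rewrite [RHS](splitr 1) mul1r.
have mid : (x - d2) + (x - d1) = (x - 2^-1 *: (d1 + d2)) + (x - 2^-1 *: (d1 + d2)).
  by rewrite addrACA [RHS]addrACA -!opprD -scalerDl half scale1r [d2 + d1]addrC.
have := parallelogram (x - d2) (x - d1).
have -> : x - d2 - (x - d1) = d1 - d2 by rewrite opprB addrC addrA subrK.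
rewrite mid norm2_double.
have := c_le _ (DZ 2^-1 (DD D1 D2)); lra.
Qed.

Lemma exists_closest x :
  exists2 y, adherent D y & forall u, adherent D u -> norm2 (x - y) <= norm2 (x - u).
Proof.
pose E : classical_sets.set R := fun r => exists2 d, D d & r = norm2 (x - d).
have E_inf : classical_sets.has_inf E.
  by split; [exists (norm2 (x - 0)), 0 | exists 0 => _ [d _ ->]; apply: norm2_ge0].
pose c := reals.inf E.
have c_le d : D d -> c <= norm2 (x - d).
  by move=> Dd; apply: reals.ge_inf E_inf.2 _ _; exists d.
have near_c n : exists d, D d /\ norm2 (x - d) < c + n.+1%:R^-1.
  have eps_gt0 : 0 < n.+1%:R^-1 :> R by rewrite invr_gt0 ltr0Sn.
  by have [_ [d Dd ->]] := reals.inf_adherent eps_gt0 E_inf; exists d.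
have [dn dn_spec] := boolp.choice near_c.
have [y lim] : exists y, forall e, 0 < e ->
    exists N0, forall n, (N0 <= n)%N -> norm2 (y - dn n) < e.
  apply: norm2_complete => e e_gt0.
  have [|N0 hN0] := inv_succ_lt (t := e / 4); first by rewrite divr_gt0.
  exists N0 => m n hm hn; have [Dm dm_lt] := dn_spec m; have [Dn dn_lt] := dn_spec n.
  have := norm2_sub_le_dist c_le Dm Dn; have := hN0 _ hm; have := hN0 _ hn.
  move: (m.+1%:R^-1) (n.+1%:R^-1) dm_lt dn_lt => im in_ *; lra.
have ady : adherent D y.
  by move=> b /lim[N0 hN0]; exists (dn N0); [exact: (dn_spec N0).1 | exact: hN0].
exists y => // u /(adherent_norm2_ge c_le); apply: le_trans.
apply: norm2_le_approx => b b_gt0.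
have [N0 hN0] := lim b b_gt0; have [N1 hN1] := inv_succ_lt b_gt0.
exists (y - dn (maxn N0 N1)); first exact/hN0/leq_maxl.
have [_] := dn_spec (maxn N0 N1); have := hN1 _ (leq_maxr N0 N1).
by rewrite addrA subrK; move: ((maxn N0 N1).+1%:R^-1) => i *; lra.
Qed.

Lemma dense_of_orthogonal0 :
  (forall z, (forall d, D d -> ip d z = 0) -> z = 0) -> dense_in ip D.
Proof.
move=> orth0 x _ /gt0_r2f[e e_gt0 ->].
have [y ady y_min] := exists_closest x.
have /orth0/subr0_eq xy : forall d, D d -> ip d (x - y) = 0.
  move=> d Dd; apply: ip_eq0_of_polar => a; apply: polar_eq0_of_min => s.
  have -> : x - y + r2f s *: (a *: d) = x - (y + (- (r2f s * a)) *: d).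
    by rewrite scalerA scaleNr opprD opprK addrA.
  by apply/y_min/adherentD/DZ.
have [d Dd xd_lt] := ady e e_gt0.
by exists d; split; rewrite // /ip_norm2 -norm2E ltr_r2f xy.
Qed.

End Subspace.

End HilbertSpace.

Lemma thm38_gen : thm38 cj.
Proof.
move=> H K ipH ipK hH hK S T; split=> [[_ graphS] | [kerS ranS]].
  split; first exact (ker_adjoint hK graphS).
  by move=> k /(ran_add_adjoint hH hK graphS).
have adj00 : adjoint_rel ipK ipH T 0 0 by move=> k _; rewrite (ip0r hH) (ip0r hK).
have ranS_sub h k : graph S h k -> exists h', graph S h' k /\ adjoint_rel ipK ipH T h' k.
  move=> Shk; apply: (ranS k); exists k, 0.
  by split; [rewrite addr0 | split; [exists h | exists 0]].
have ranadjT h k : adjoint_rel ipK ipH T h k ->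
    exists h', graph S h' k /\ adjoint_rel ipK ipH T h' k.
  move=> adjh; apply: (ranS k); exists 0, k.
  split; first by rewrite add0r.
  by split; [exists 0; split; [apply: dom0 | apply: app0] | exists h].
split; last exact (graph_adjointE hH hK kerS ranS_sub ranadjT).
apply: (dense_of_orthogonal0 hK (dom0 T) (@domL _ _ _ T)) => z z_perp.
apply: (adjoint_mul0 hH hK kerS ranadjT) => k Dk.
by rewrite (ip0r hH) z_perp.
Qed.

End RealScalars.

End ScalarField.

Theorem theorem3p8 (R : realType) :
  thm38 (fun x : R => x) /\ thm38 (fun z : R[i] => Num.conj z).
Proof.
split.
  exact: (@thm38_gen R idfun R idfun idfun
    (fun _ => erefl) (fun _ => erefl) (fun _ _ => erefl) (fun _ _ => erefl)).
apply: (@thm38_gen _ Num.conj R (real_complex R) (@complex.Re R)).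
- exact: conjCK.
- by move=> s; apply/conj_Creal/complex_realP; exists s.
- exact: lecR.
- by move=> z /ger0_real/RRe_real.
Qed.
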